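(* Let $\mathcal{R}_1$ be the family of all south-west quadrants and $\mathcal{R}_2 = \{\{(x,y) \in \mathbb{R}^2 : a \leq x+y \leq b\} : a,b \in \mathbb{R}\}$ the family of all diagonal strips of slope $-1$. Then for $\mathcal{R} = \mathcal{R}_1 \cup \mathcal{R}_2$ we have $m_{\mathcal{R}}(2) = \infty$.
   Context: South-west quadrants: $\{\{(x,y) : x \leq a,\ y \leq b\} : a,b \in \mathbb{R}\}$. For finite $V \subset \mathbb{R}^2$, $\mathcal{H}(V,\mathcal{R},m)$ is the hypergraph on $V$ whose hyperedges are the sets $V \cap R$, $R \in \mathcal{R}$, of size exactly $m$. A coloring is polychromatic if every hyperedge contains each color. Point sets are in general position (pairwise distinct $x$-coordinates, $y$-coordinates and values $x+y$). $m_{\mathcal{R}}(k)$ is the smallest $m$ such that for every finite $V$ in general position $\mathcal{H}(V,\mathcal{R},m)$ admits a polychromatic $k$-coloring, and $\infty$ if no such $m$ exists. *)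

From Stdlib Require Import Reals.
From mathcomp Require Import all_boot all_order all_algebra.
From mathcomp Require Import Rstruct.
Set Implicit Arguments. Unset Strict Implicit. Unset Printing Implicit Defensive.
Import Order.TTheory GRing.Theory Num.Theory.
Local Open Scope ring_scope.

Definition point := (R * R)%type.

Definition region := pred point.
Definition family := region -> Prop.

Definition sw_quadrant (a b : R) : region := fun p => (p.1 <= a) && (p.2 <= b).
Definition SW_quadrants : family :=
  fun Q => exists a b : R, forall p, Q p = sw_quadrant a b p.

Definition diag_strip (a b : R) : region :=
  fun p => (a <= p.1 + p.2) && (p.1 + p.2 <= b).
Definition diag_strips : family :=
  fun Q => exists a b : R, forall p, Q p = diag_strip a b p.

Definition family_union (F1 F2 : family) : family := fun Q => F1 Q \/ F2 Q.

Definition general_position (V : seq point) : Prop :=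
  forall p q, p \in V -> q \in V -> p <> q ->
    [/\ p.1 <> q.1, p.2 <> q.2 & p.1 + p.2 <> q.1 + q.2].

(* the hyperedge V ∩ Q (V duplicate-free) *)
Definition hedge (V : seq point) (Q : region) : seq point := [seq v <- V | Q v].

Definition polychromatic (F : family) (V : seq point) (m k : nat)
    (c : point -> 'I_k) : Prop :=
  forall Q, F Q -> size (hedge V Q) = m ->
    forall i : 'I_k, exists2 v, v \in hedge V Q & c v = i.

Definition m_works (F : family) (k m : nat) : Prop :=
  forall V : seq point, uniq V -> general_position V ->
    exists c : point -> 'I_k, @polychromatic F V m k c.

Definition m_infinite (F : family) (k : nat) : Prop := ~ exists m : nat, m_works F k m.

From Stdlib Require Import Reals.
From mathcomp Require Import all_boot all_order all_algebra.
From mathcomp Require Import Rstruct lra.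

(* Induction on d: for m >= 1 and every d there is a finite set T in general
   position, inside a box of half-width W, such that for every colouring in
   which each diagonal strip with exactly m points of T meets every colour,
   each colour owns a south-west quadrant containing exactly d points of T, all
   of that colour.  For d = m this contradicts the polychromaticity of the
   quadrant hyperedges of size m.

   For the step, m translates of T are placed along a staircase descending to
   the right, separated in x, in y and in x + y, and each copy gets an extra
   corner point south-west of it.  The m corners alone form a strip hyperedge,
   so the corner of some copy i has the prescribed colour.  Strips meeting only
   copy i make the colouring pulled back to T strip-polychromatic, and its
   monochromatic d-point quadrant, moved into copy i, picks up the corner and
   no other point. *)

Set Implicit Arguments.
Unset Strict Implicit.
Unset Printing Implicit Defensive.

Import Order.TTheory GRing.Theory Num.Theory.
Local Open Scope ring_scope.

Lemma ler_natrM_gap (F : numDomainType) (x : F) (i j : nat) :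
  0 <= x -> (i < j)%N -> i%:R * x + x <= j%:R * x.
Proof.
move=> x_ge0 ij; rewrite -[X in _ + X]mul1r -mulrDl ler_wpM2r //.
by rewrite natr1 ler_nat.
Qed.

Definition in_box (W : R) (p : point) : Prop :=
  [/\ -W < p.1, p.1 < W, -W < p.2 & p.2 < W].

(* Only strips with bounds in [-2W, 2W] are constrained: a translated copy of T
   inside a larger configuration must not see the other copies. *)
Definition strip_polychromatic (C : Type) (W : R) (m : nat) (T : seq point)
    (c : point -> C) : Prop :=
  forall lo hi, -(2 * W) <= lo -> hi <= 2 * W ->
    size (hedge T (diag_strip lo hi)) = m ->
  forall col, exists2 v, v \in hedge T (diag_strip lo hi) & c v = col.

Definition quadrant_forcing (m d : nat) (W : R) (T : seq point) : Prop :=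
  forall (C : Type) (c : point -> C), strip_polychromatic W m T c ->
  forall col, exists p, [/\ in_box W p, size (hedge T (sw_quadrant p.1 p.2)) = d
    & {in hedge T (sw_quadrant p.1 p.2), forall v, c v = col}].

Definition forcing_config (m d : nat) (W : R) (T : seq point) : Prop :=
  [/\ 0 < W, uniq T, general_position T, {in T, forall p, in_box W p}
    & quadrant_forcing m d W T].

Lemma forcing_config_nil m W : 0 < W -> forcing_config m 0 W [::].
Proof.
move=> W_gt0; split=> //.
by move=> C c _ col; exists (0, 0); split=> //; split=> /=; lra.
Qed.

Section Staircase.

(* [S] separates the diagonal bands (of width [4W]) of consecutive copies, [r]
   puts every corner diagonally below all copies, and [D] separates the cells
   [[-r, W)^2] of consecutive copies. *)
Variables (m : nat) (W S r D : R) (T : seq point).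
Hypotheses (m_gt0 : (0 < m)%N) (W_gt0 : 0 < W).
Hypotheses (S_gt : 4 * W < S) (r_ge : W + m%:R * S <= r) (D_ge : r + W <= D).
Hypotheses (T_uniq : uniq T) (T_box : {in T, forall p, in_box W p}).

Definition shift (j : nat) (v : point) : point :=
  (v.1 + j%:R * D + j%:R * S, v.2 - j%:R * D).
Definition corner : point := (- r, - r).
Definition block : seq point := corner :: T.
Definition staircase : seq point := [seq shift j v | j <- iota 0 m, v <- block].
Definition staircase_width := r + m%:R * D + m%:R * S.
(* [%R]: arguments of type [R] are otherwise read in Stdlib's [R_scope]. *)
Definition corner_strip : region := diag_strip (- (2 * r))%R (- (2 * W))%R.

(* [lra] only looks at the local context, not at section hypotheses. *)
Local Ltac spacing_lra :=
  have ? := W_gt0; have ? := S_gt; have ? := r_ge; have ? := D_ge; lra.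

Lemma S_gt0 : 0 < S. Proof. spacing_lra. Qed.

Lemma W_lt_r : W < r.
Proof.
have := ler_natrM_gap (ltW S_gt0) m_gt0.
by rewrite mul0r add0r; spacing_lra.
Qed.

Lemma D_gt0 : 0 < D. Proof. by have := W_lt_r; spacing_lra. Qed.

Lemma offset_ge0 j : 0 <= j%:R * D /\ 0 <= j%:R * S.
Proof. by split; apply: mulr_ge0; rewrite ?ler0n ?ltW ?S_gt0 ?D_gt0. Qed.

Lemma offset_gap i j : (i < j)%N ->
  i%:R * D + D <= j%:R * D /\ i%:R * S + S <= j%:R * S.
Proof. by split; apply: ler_natrM_gap; rewrite ?ltW ?S_gt0 ?D_gt0. Qed.

Definition in_cell (v : point) : Prop :=
  [/\ -r <= v.1, v.1 < W, -r <= v.2 & v.2 < W].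

Lemma box_cell p : in_box W p -> in_cell p.
Proof. by have := W_lt_r => ? [*]; split; spacing_lra. Qed.

Lemma block_cell v : v \in block -> in_cell v.
Proof.
rewrite in_cons => /predU1P[->|/T_box/box_cell//].
by have := W_lt_r; split=> /=; spacing_lra.
Qed.

Lemma shift_cell_lt i j a b : (i < j)%N -> in_cell a -> in_cell b ->
  (shift i a).1 < (shift j b).1 /\ (shift j b).2 < (shift i a).2.
Proof.
move=> /offset_gap[gD gS] [a1 a2 a3 a4] [b1 b2 b3 b4].
by rewrite /shift /=; split; spacing_lra.
Qed.

Lemma shift_inj j : injective (shift j).
Proof.
by move=> [a1 a2] [b1 b2]; rewrite /shift => -[e1 e2]; congr pair; lra.
Qed.

Lemma shift_cell_inj i j a b : in_cell a -> in_cell b ->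
  shift i a = shift j b -> i = j /\ a = b.
Proof.
move=> ca cb e; case: (ltngtP i j) => [ij|ji|ij].
- by have [+ _] := shift_cell_lt ij ca cb; rewrite e ltxx.
- by have [_] := shift_cell_lt ji cb ca; rewrite e ltxx.
- by subst j; split=> //; apply: shift_inj e.
Qed.

Lemma uniq_block : uniq block.
Proof.
rewrite /= T_uniq andbT; apply/negP => /T_box[]; rewrite /corner /= => lt _ _ _.
by have := W_lt_r; spacing_lra.
Qed.

Lemma staircaseP v : reflect
  (exists2 j, (j < m)%N & exists2 b, b \in block & v = shift j b)
  (v \in staircase).
Proof.
apply: (iffP allpairsP) => [[[j b] /= [jm bB ->]]|[j jm [b bB ->]]].
  by exists j; [rewrite mem_iota in jm | exists b].
by exists (j, b); rewrite mem_iota.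
Qed.

Lemma shift_in_staircase j b :
  (j < m)%N -> b \in block -> shift j b \in staircase.
Proof. by move=> jm bB; apply/staircaseP; exists j => //; exists b. Qed.

Lemma uniq_staircase : uniq staircase.
Proof.
rewrite allpairs_uniq ?iota_uniq ?uniq_block //.
move=> [i a] [j b] /allpairsP[[? ?] [_ aB [-> ->]]].
move=> /allpairsP[[? ?] [_ bB [-> ->]]] /=.
by move=> /(shift_cell_inj (block_cell aB) (block_cell bB))[-> /= ->].
Qed.

Lemma general_position_block : general_position T -> general_position block.
Proof.
move=> gpT p q; rewrite !in_cons.
have corner_apart v : v \in T ->
    [/\ -r <> v.1, -r <> v.2 & -r + -r <> v.1 + v.2].
  by move=> /T_box[? ? ? ?]; have := W_lt_r; split=> ?; spacing_lra.
case/predU1P=> [->|pT] /predU1P[->|qT] pq //; first exact: corner_apart.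
  by have [? ? ?] := corner_apart p pT; split; apply: not_eq_sym.
exact: gpT.
Qed.

Lemma shift_apart i j a b :
    (i < j)%N -> (j < m)%N -> a \in block -> b \in block ->
  [/\ (shift i a).1 <> (shift j b).1, (shift i a).2 <> (shift j b).2
    & (shift i a).1 + (shift i a).2 <> (shift j b).1 + (shift j b).2].
Proof.
move=> ij jm aB bB.
have [? ?] := shift_cell_lt ij (block_cell aB) (block_cell bB).
split=> [e|e|]; [spacing_lra | spacing_lra |].
have [? ?] := offset_gap ij; have [_ ?] := offset_gap jm.
have [_ ?] := offset_ge0 i; have := W_lt_r.
move: aB bB; rewrite !in_cons /shift /=.
by case/predU1P=> [->|/T_box[? ? ? ?]] /predU1P[->|/T_box[? ? ? ?]] /= ? ?;
  spacing_lra.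
Qed.

Lemma general_position_staircase :
  general_position T -> general_position staircase.
Proof.
move=> gpT u v /staircaseP[i im [a aB ->]] /staircaseP[j jm [b bB ->]] neq.
case: (ltngtP i j) => [ij|ji|ij]; first exact: shift_apart.
  by have [? ? ?] := shift_apart ji im bB aB; split; apply: not_eq_sym.
subst j; have ab : a <> b by move=> e; apply: neq; rewrite e.
have [x y s] := general_position_block gpT aB bB ab.
by rewrite /shift /=; split=> e; [apply: x | apply: y | apply: s]; spacing_lra.
Qed.

Lemma staircase_width_ge : r + m%:R * S <= staircase_width.
Proof. by have [? _] := offset_ge0 m; rewrite /staircase_width; lra. Qed.

Lemma shift_cell_box j b : (j < m)%N -> in_cell b ->
  in_box staircase_width (shift j b).
Proof.
move=> /offset_gap[? ?] [? ? ? ?]; have [? ?] := offset_ge0 j.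
have := W_lt_r; have := D_gt0; rewrite /staircase_width.
by split=> /=; spacing_lra.
Qed.

Lemma staircase_box : {in staircase, forall v, in_box staircase_width v}.
Proof.
by move=> _ /staircaseP[j jm [b /block_cell bC ->]]; apply: shift_cell_box.
Qed.

Lemma hedge_staircase_copy (Q : region) i : (i < m)%N ->
    (forall j b, (j < m)%N -> b \in block -> Q (shift j b) -> j = i) ->
  perm_eq (hedge staircase Q)
          [seq shift i b | b <- hedge block (preim (shift i) Q)].
Proof.
move=> im only_i; apply: uniq_perm.
- exact/filter_uniq/uniq_staircase.
- by rewrite map_inj_uniq ?filter_uniq ?uniq_block //; apply: shift_inj.
move=> v; rewrite mem_filter; apply/andP/mapP.
  case=> Qv /staircaseP[j jm [b bB ev]].
  subst v; have ji := only_i j b jm bB Qv; subst j.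
  by exists b; rewrite // mem_filter bB andbT.
case=> b; rewrite mem_filter => /andP[Qb bB] ->.
by split=> //; apply: shift_in_staircase.
Qed.

Lemma hedge_corner_strip :
  perm_eq (hedge staircase corner_strip) [seq shift j corner | j <- iota 0 m].
Proof.
have cornerC : in_cell corner by apply/block_cell/mem_head.
apply: uniq_perm; first exact/filter_uniq/uniq_staircase.
  rewrite map_inj_in_uniq ?iota_uniq // => i j _ _.
  by move=> /(shift_cell_inj cornerC cornerC)[].
move=> v; rewrite mem_filter; apply/andP/mapP.
  case=> + /staircaseP[j jm [b bB ev]]; subst v.
  move: bB; rewrite in_cons => /predU1P[-> _|/T_box[? ? ? ?]].
    by exists j; rewrite // mem_iota.
  have [_ ?] := offset_ge0 j.
  by rewrite /corner_strip /diag_strip /shift /= => /andP[_ ?]; spacing_lra.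
case=> j; rewrite mem_iota => /andP[_ jm] ->.
split; last exact/shift_in_staircase/mem_head.
have [_ ?] := offset_ge0 j; have [_ ?] := offset_gap jm.
rewrite /corner_strip /diag_strip /shift /corner /=.
by apply/andP; split; spacing_lra.
Qed.

Lemma hedge_staircase_strip i lo hi :
    (i < m)%N -> -(2 * W) <= lo -> hi <= 2 * W ->
  perm_eq (hedge staircase (diag_strip (lo + i%:R * S)%R (hi + i%:R * S)%R))
          [seq shift i b | b <- hedge T (diag_strip lo hi)].
Proof.
move=> im lo_ge hi_le.
set Q := diag_strip (lo + i%:R * S)%R (hi + i%:R * S)%R.
have preimE : preim (shift i) Q =1 diag_strip lo hi.
  move=> v; rewrite /preim /Q /diag_strip /shift /=.
  by apply/idP/idP => /andP[? ?]; apply/andP; split; lra.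
have corner_out : diag_strip lo hi corner = false.
  apply/negbTE/nandP; left; rewrite -ltNge /corner /=.
  by have := W_lt_r; spacing_lra.
have -> : hedge T (diag_strip lo hi) = hedge block (preim (shift i) Q).
  by rewrite /hedge (eq_filter preimE) /= corner_out.
apply: hedge_staircase_copy => // j b jm bB.
have [? ?] := offset_ge0 i; have [? ?] := offset_ge0 j.
have [_ ?] := offset_gap jm.
rewrite /diag_strip => /andP[l h].
move: bB l h; rewrite in_cons /shift /=.
case/predU1P=> [->|/T_box[? ? ? ?]] l h.
  by move: l; rewrite /corner /= => l; exfalso; have := W_lt_r; spacing_lra.
case: (ltngtP i j) => [/offset_gap[_ ?]|/offset_gap[_ ?]|//];
  by exfalso; spacing_lra.
Qed.

Lemma hedge_staircase_quadrant i p : (i < m)%N -> in_box W p ->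
  perm_eq (hedge staircase (sw_quadrant (shift i p).1 (shift i p).2))
          [seq shift i b | b <- corner :: hedge T (sw_quadrant p.1 p.2)].
Proof.
move=> im pB.
have preimE : preim (shift i) (sw_quadrant (shift i p).1 (shift i p).2)
    =1 sw_quadrant p.1 p.2.
  by move=> v; rewrite /preim /sw_quadrant /shift /= !lerD2r.
have corner_in : sw_quadrant p.1 p.2 corner.
  have [? ? ? ?] := pB; have ? := W_lt_r.
  by rewrite /sw_quadrant /corner /=; apply/andP; split; spacing_lra.
have -> : corner :: hedge T (sw_quadrant p.1 p.2)
    = hedge block (preim (shift i) (sw_quadrant (shift i p).1 (shift i p).2)).
  by rewrite /hedge (eq_filter preimE) /= corner_in.
apply: hedge_staircase_copy => // j b _ /block_cell bC.
rewrite /sw_quadrant => /andP[x y].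
case: (ltngtP i j) => [ij|ji|//].
  by have [/lt_geF e _] := shift_cell_lt ij (box_cell pB) bC; rewrite x in e.
by have [_ /lt_geF e] := shift_cell_lt ji bC (box_cell pB); rewrite y in e.
Qed.

Lemma quadrant_forcing_staircase d :
  quadrant_forcing m d W T -> quadrant_forcing m d.+1 staircase_width staircase.
Proof.
move=> forcing C c c_poly col.
have W'_ge := staircase_width_ge; have W_r := W_lt_r.
have [v] : exists2 v, v \in hedge staircase corner_strip & c v = col.
  have [_ ?] := offset_ge0 m.
  apply: c_poly; [spacing_lra | spacing_lra |].
  by rewrite (perm_size hedge_corner_strip) size_map size_iota.
rewrite (perm_mem hedge_corner_strip) => /mapP[i].
rewrite mem_iota => /andP[_ im] -> ci.
have [_ ?] := offset_ge0 i; have [_ ?] := offset_gap im.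
have [|p [pB p_size p_mono]] := forcing C (c \o shift i) _ col.
  move=> lo hi lo_ge hi_le lohi_size col'.
  have hedgeE := hedge_staircase_strip im lo_ge hi_le.
  have [|||w] := c_poly (lo + i%:R * S) (hi + i%:R * S) _ _ _ col'.
  - spacing_lra.
  - spacing_lra.
  - by rewrite (perm_size hedgeE) size_map.
  by rewrite (perm_mem hedgeE) => /mapP[b b_in ->]; exists b.
have hedgeE := hedge_staircase_quadrant im pB.
exists (shift i p); split.
- exact/shift_cell_box/box_cell.
- by rewrite (perm_size hedgeE) /= size_map p_size.
move=> w; rewrite (perm_mem hedgeE) => /mapP[b]; rewrite in_cons.
by case/predU1P=> [-> ->|b_in ->] //; apply: p_mono.
Qed.

Lemma staircase_width_gt0 : 0 < staircase_width.
Proof.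
have := W_lt_r; have := staircase_width_ge; have [_ ?] := offset_ge0 m.
by spacing_lra.
Qed.

End Staircase.

Lemma exists_forcing_config m d :
  (0 < m)%N -> exists W T, forcing_config m d W T.
Proof.
move=> m_gt0; elim: d => [|d [W [T [W_gt0 T_uniq gpT T_box forcing]]]].
  by exists 1%R, [::]; apply/forcing_config_nil/ltr01.
pose S := 4 * W + 1; pose r := W + m%:R * S; pose D := r + W.
have S_gt : 4 * W < S by rewrite /S; lra.
have r_ge : W + m%:R * S <= r := lexx _.
have D_ge : r + W <= D := lexx _.
exists (staircase_width m S r D), (staircase m S r D T); split.
- by apply: (staircase_width_gt0 m_gt0 W_gt0 S_gt).
- by apply: (uniq_staircase m_gt0 W_gt0 S_gt).
- by apply: (general_position_staircase m_gt0 W_gt0 S_gt).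
- by apply: (staircase_box m_gt0 W_gt0 S_gt).
- by apply: (quadrant_forcing_staircase m_gt0 W_gt0 S_gt).
Qed.

Theorem corollary7 : m_infinite (family_union SW_quadrants diag_strips) 2.
Proof.
move=> [m m_works].
have [W [T [_ T_uniq gpT _ forcing]]] : exists W T, forcing_config m m W T.
  case: m m_works => [_|m _]; last exact: exists_forcing_config.
  by exists 1%R, [::]; apply/forcing_config_nil/ltr01.
have [c c_poly] := m_works T T_uniq gpT.
have [|p [_ p_size p_mono]] := forcing _ c _ ord0.
  by move=> lo hi _ _; apply: c_poly; right; exists lo, hi.
have [|v v_in cv] := c_poly (sw_quadrant p.1 p.2) _ p_size ord_max.
  by left; exists p.1, p.2.
by rewrite p_mono in cv.
Qed.
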